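(* The maps $\sigma,\tau,\theta:E\to E$ defined by \[\sigma(A)=-A^*,\qquad \tau(A)=-A^{\mathrm t},\qquad \theta(A)=TAT^{-1}\] pairwise commute.
   Context: Setting: - $V$ is a finite-dimensional complex inner product space, and $W=V\oplus V^*$ carries the orthogonal-sum unitary structure $\langle\,,\rangle$, where $V^*$ gets the structure transported from $V$ via $C_0v=\langle v,\cdot\rangle_V$, i.e. $\langle f,\tilde f\rangle=\langle C_0^{-1}\tilde f,C_0^{-1}f\rangle_V$. - $b$ is either $s(v_1+f_1,v_2+f_2)=f_1(v_2)+f_2(v_1)$ or $a(v_1+f_1,v_2+f_2)=f_1(v_2)-f_2(v_1)$. - $C:W\to W$ is antilinear with $C|_V=C_0$ and $C|_{V^*}=C_0^{-1}$ (if $b=s$) or $-C_0^{-1}$ (if $b=a$), so that $b(Cw_1,w_2)=\langle w_1,w_2\rangle$. - $E$ is either $\mathrm{End}(W)$ or $\mathrm{End}(V)\oplus\mathrm{End}(V^* )$. - $A^*$ is the adjoint with respect to $\langle\,,\rangle$, and $A^{\mathrm t}$ the adjoint with respect to $b$ ($b(Aw_1,w_2)=b(w_1,A^{\mathrm t}w_2)$). - $T:W\to W$ is antiunitary, commutes with $C$, satisfies $T^2=\pm\mathrm{Id}$, and is either nonmixing ($T(V)=V$, $T(V^* )=V^*$) or mixing ($T(V)=V^*$, $T(V^* )=V$). *)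

From HB Require Import structures.
From mathcomp Require Import all_boot all_order all_algebra.
From mathcomp Require Import complex.
Set Implicit Arguments. Unset Strict Implicit. Unset Printing Implicit Defensive.
Import Order.TTheory GRing.Theory Num.Theory.
Local Open Scope ring_scope.

Section Setting.
Variable R : rcfType.
Local Notation K := (R[i]).

Definition adjmx m p (A : 'M[K]_(m, p)) : 'M[K]_(p, m) := (map_mx Num.conj A)^T.

(* V = K^n as column vectors, with inner product <u,v>_V = u^* G v
   (antilinear in the first, linear in the second argument), where G is a
   positive definite Hermitian matrix (any finite-dimensional inner product
   space is of this form after choosing a basis).
   V^* = row vectors 'rV_n, f(v) = f *m v. *)
Variable n : nat.
Variable G : 'M[K]_n.

Definition ipV (u v : 'cV[K]_n) : K := (adjmx u *m G *m v) 0 0.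

Definition C0 (v : 'cV[K]_n) : 'rV[K]_n := adjmx v *m G.
Definition C0inv (f : 'rV[K]_n) : 'cV[K]_n := adjmx (f *m invmx G).

(* W = V (+) V^* is modelled as 'cV_(n + n): a vector w encodes
   v + f with v = usubmx w and f = (dsubmx w)^T. *)
Definition Wpart (w : 'cV[K]_(n + n)) : 'cV[K]_n := usubmx w.
Definition Dpart (w : 'cV[K]_(n + n)) : 'rV[K]_n := (dsubmx w)^T.
Definition mkW (v : 'cV[K]_n) (f : 'rV[K]_n) : 'cV[K]_(n + n) := col_mx v f^T.

Definition ipW (w1 w2 : 'cV[K]_(n + n)) : K :=
  ipV (Wpart w1) (Wpart w2) + ipV (C0inv (Dpart w2)) (C0inv (Dpart w1)).

(* sym = true : b = s (symmetric);  sym = false : b = a (antisymmetric) *)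
Definition sgnb (sym : bool) : K := if sym then 1 else -1.

Definition bW (sym : bool) (w1 w2 : 'cV[K]_(n + n)) : K :=
  (Dpart w1 *m Wpart w2) 0 0 + sgnb sym * (Dpart w2 *m Wpart w1) 0 0.

Definition Cmap (sym : bool) (w : 'cV[K]_(n + n)) : 'cV[K]_(n + n) :=
  mkW (sgnb sym *: C0inv (Dpart w)) (C0 (Wpart w)).

Definition gramW (F : 'cV[K]_(n + n) -> 'cV[K]_(n + n) -> K) : 'M[K]_(n + n) :=
  \matrix_(i, j) F (delta_mx i 0) (delta_mx j 0).

(* A^* : adjoint w.r.t. <,> ; since <w1,w2> = w1^* H w2, A^* = H^-1 A^*T H *)
Definition adjW (A : 'M[K]_(n + n)) : 'M[K]_(n + n) :=
  invmx (gramW ipW) *m adjmx A *m gramW ipW.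

(* A^t : adjoint w.r.t. b ; since b(w1,w2) = w1^T B w2, A^t = B^-1 A^T B *)
Definition transW (sym : bool) (A : 'M[K]_(n + n)) : 'M[K]_(n + n) :=
  invmx (gramW (bW sym)) *m A^T *m gramW (bW sym).

Definition fun_mx (f : 'cV[K]_(n + n) -> 'cV[K]_(n + n)) : 'M[K]_(n + n) :=
  \matrix_(i, j) f (delta_mx j 0) i 0.

Definition thetaW (T Tinv : 'cV[K]_(n + n) -> 'cV[K]_(n + n))
  (A : 'M[K]_(n + n)) : 'M[K]_(n + n) :=
  fun_mx (fun w => T (A *m Tinv w)).

Definition sigmaW (A : 'M[K]_(n + n)) : 'M[K]_(n + n) := - adjW A.
Definition tauW (sym : bool) (A : 'M[K]_(n + n)) : 'M[K]_(n + n) :=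
  - transW sym A.

(* E : Eall = true : E = End(W);  Eall = false : E = End(V) (+) End(V dual) *)
Definition inEsp (Eall : bool) (A : 'M[K]_(n + n)) : Prop :=
  Eall \/ (ursubmx A = 0 /\ dlsubmx A = 0).

Definition inV (w : 'cV[K]_(n + n)) : Prop := dsubmx w = 0.
Definition inVd (w : 'cV[K]_(n + n)) : Prop := usubmx w = 0.

Definition maps_onto (T : 'cV[K]_(n + n) -> 'cV[K]_(n + n))
  (X Y : 'cV[K]_(n + n) -> Prop) : Prop :=
  (forall w, X w -> Y (T w)) /\ (forall w, Y w -> exists2 w', X w' & T w' = w).

End Setting.

(* If H and B are the Gram matrices of <,>
   and b, and M is the matrix of T (so that T w = M conj(w)), then
   sigma(A) = - H^-1 A^* H,  tau(A) = - B^-1 A^T B  and  theta(A) = M conj(A) M^-1.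
   Each map is, up to sign, one of the commuting involutions A^*, A^T, conj(A)
   followed by conjugation by an invertible matrix, so two of the maps commute
   as soon as the two composite conjugating matrices agree.  For sigma and tau
   this is B^* = H B^-1 H^T, which is b(C w1, w2) = <w1, w2> in coordinates
   (here <,>_V must be Hermitian); for sigma and theta it is M^* H M = conj(H),
   i.e. T is antiunitary; for tau and theta it is M^T B M = conj(B), i.e.
   b(T w1, T w2) = conj(b(w1, w2)), which follows from T C = C T. *)

From HB Require Import structures.
From mathcomp Require Import all_boot all_order all_algebra.
From mathcomp Require Import complex mxred.
Set Implicit Arguments. Unset Strict Implicit. Unset Printing Implicit Defensive.
Import Order.TTheory GRing.Theory Num.Theory.
Local Open Scope ring_scope.

Lemma mulmx1_invmx (F : comUnitRingType) k (X Y : 'M[F]_k) :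
  X *m Y = 1%:M -> invmx X = Y.
Proof.
move=> XY; have [Xu _] := mulmx1_unit XY.
by rewrite -[RHS]mul1mx -(mulVmx Xu) -mulmxA XY mulmx1.
Qed.

Lemma invmxM (F : comUnitRingType) k (X Y : 'M[F]_k) :
  X \in unitmx -> Y \in unitmx -> invmx (X *m Y) = invmx Y *m invmx X.
Proof.
move=> Xu Yu; apply: mulmx1_invmx.
by rewrite mulmxA -(mulmxA X) (mulmxV Yu) mulmx1 (mulmxV Xu).
Qed.

Section AdjointMatrix.
Variable R : rcfType.
Local Notation K := R[i].
Local Notation conjm := (map_mx Num.conj).

Lemma conjmK m p (A : 'M[K]_(m, p)) : conjm (conjm A) = A.
Proof. by apply/matrixP => i j; rewrite !mxE conjCK. Qed.

Lemma adjmxK m p (A : 'M[K]_(m, p)) : adjmx (adjmx A) = A.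
Proof. by rewrite /adjmx map_trmx trmxK conjmK. Qed.

Lemma adjmxM m p q (A : 'M[K]_(m, p)) (B : 'M[K]_(p, q)) :
  adjmx (A *m B) = adjmx B *m adjmx A.
Proof. by rewrite /adjmx map_mxM trmx_mul. Qed.

Lemma adjmxN m p (A : 'M[K]_(m, p)) : adjmx (- A) = - adjmx A.
Proof. by rewrite /adjmx map_mxN linearN. Qed.

Lemma adjmxZ m p a (A : 'M[K]_(m, p)) : adjmx (a *: A) = a^* *: adjmx A.
Proof. by rewrite /adjmx map_mxZ linearZ. Qed.

Lemma adjmx_inv k (A : 'M[K]_k) : adjmx (invmx A) = invmx (adjmx A).
Proof. by rewrite /adjmx map_invmx trmx_inv. Qed.

Lemma adjmx_unit k (A : 'M[K]_k) : (adjmx A \in unitmx) = (A \in unitmx).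
Proof. by rewrite /adjmx unitmx_tr map_unitmx. Qed.

Lemma adjmx_trmx m p (A : 'M[K]_(m, p)) : adjmx A^T = conjm A.
Proof. by rewrite /adjmx map_trmx trmxK. Qed.

Lemma conjm_adjmx m p (A : 'M[K]_(m, p)) : conjm (adjmx A) = A^T.
Proof. by rewrite /adjmx -map_trmx conjmK. Qed.

Lemma adjmx_delta m p (i : 'I_m) (j : 'I_p) :
  adjmx (delta_mx i j : 'M[K]_(m, p)) = delta_mx j i.
Proof.
by rewrite /adjmx map_trmx trmx_delta; apply/matrixP => a b; rewrite !mxE rmorph_nat.
Qed.

Lemma conjm_delta m p (i : 'I_m) (j : 'I_p) :
  conjm (delta_mx i j : 'M[K]_(m, p)) = delta_mx i j.
Proof. by apply/matrixP => a b; rewrite !mxE rmorph_nat. Qed.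

Lemma adjmx_conjmx k (V A : 'M[K]_k) : V \in unitmx ->
  adjmx (conjmx V A) = conjmx (invmx (adjmx V)) (adjmx A).
Proof.
by move=> Vu; rewrite conjumx // conjVmx ?adjmx_unit // !adjmxM adjmx_inv mulmxA.
Qed.

Lemma trmx_conjmx k (V A : 'M[K]_k) : V \in unitmx ->
  (conjmx V A)^T = conjmx (invmx V^T) A^T.
Proof.
by move=> Vu; rewrite conjumx // conjVmx ?unitmx_tr // !trmx_mul trmx_inv mulmxA.
Qed.

Lemma conjm_conjmx k (V A : 'M[K]_k) : V \in unitmx ->
  conjm (conjmx V A) = conjmx (conjm V) (conjm A).
Proof. by move=> Vu; rewrite !conjumx ?map_unitmx // !map_mxM map_invmx. Qed.

Lemma trmx_adjmx m p (A : 'M[K]_(m, p)) : (adjmx A)^T = conjm A.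
Proof. exact: trmxK. Qed.

Lemma adjmx_conjm m p (A : 'M[K]_(m, p)) : adjmx (conjm A) = A^T.
Proof. by rewrite /adjmx conjmK. Qed.

End AdjointMatrix.

Lemma trmx11 (T : Type) (A : 'M[T]_1) : A^T 0 0 = A 0 0.
Proof. by rewrite mxE. Qed.

Section FormAdjoints.
Variables (R : rcfType) (k : nat).
Local Notation K := R[i].
Local Notation conjm := (map_mx Num.conj).
Implicit Types H B M A : 'M[K]_k.

Definition adjmx_wrt H A := conjmx (invmx H) (adjmx A).
Definition trmx_wrt B A := conjmx (invmx B) A^T.
Definition anticonjmx M A := conjmx M (conjm A).

Lemma adjmx_wrtN H A : adjmx_wrt H (- A) = - adjmx_wrt H A.
Proof. by rewrite /adjmx_wrt /conjmx adjmxN mulmxN mulNmx. Qed.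

Lemma trmx_wrtN B A : trmx_wrt B (- A) = - trmx_wrt B A.
Proof. by rewrite /trmx_wrt /conjmx linearN /= mulmxN mulNmx. Qed.

Lemma anticonjmxN M A : anticonjmx M (- A) = - anticonjmx M A.
Proof. by rewrite /anticonjmx /conjmx map_mxN mulmxN mulNmx. Qed.

Lemma adjmx_wrt_trmx_wrtC H B A : H \in unitmx -> B \in unitmx ->
  adjmx B = H *m invmx B *m H^T ->
  adjmx_wrt H (trmx_wrt B A) = trmx_wrt B (adjmx_wrt H A).
Proof.
move=> Hu Bu BH; rewrite /adjmx_wrt /trmx_wrt.
have iBu : invmx B \in unitmx by rewrite unitmx_inv.
have iHu : invmx H \in unitmx by rewrite unitmx_inv.
have aBu : adjmx B \in unitmx by rewrite adjmx_unit.
have tHu : H^T \in unitmx by rewrite unitmx_tr.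
rewrite (adjmx_conjmx _ iBu) (trmx_conjmx _ iHu) adjmx_inv invmxK trmx_inv invmxK.
rewrite adjmx_trmx trmx_adjmx -(conjuMumx _ iHu aBu) -(conjuMumx _ iBu tHu).
by rewrite BH !mulmxA (mulVmx Hu) mul1mx.
Qed.

Lemma adjmx_wrt_anticonjmxC H M A : H \in unitmx -> M \in unitmx ->
  adjmx M *m H *m M = conjm H ->
  adjmx_wrt H (anticonjmx M A) = anticonjmx M (adjmx_wrt H A).
Proof.
move=> Hu Mu MHM; rewrite /adjmx_wrt /anticonjmx.
have iHu : invmx H \in unitmx by rewrite unitmx_inv.
have aMu : adjmx M \in unitmx by rewrite adjmx_unit.
have iaMu : invmx (adjmx M) \in unitmx by rewrite unitmx_inv.
have icHu : invmx (conjm H) \in unitmx by rewrite unitmx_inv map_unitmx.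
rewrite (adjmx_conjmx _ Mu) (conjm_conjmx _ iHu) map_invmx conjm_adjmx adjmx_conjm.
rewrite -(conjuMumx _ iHu iaMu) -(conjuMumx _ Mu icHu).
have aMHu : adjmx M *m H \in unitmx by rewrite unitmx_mul aMu.
rewrite -MHM (invmxM aMHu Mu) (invmxM aMu Hu).
by rewrite !mulmxA (mulmxV Mu) mul1mx.
Qed.

Lemma trmx_wrt_anticonjmxC B M A : B \in unitmx -> M \in unitmx ->
  M^T *m B *m M = conjm B ->
  trmx_wrt B (anticonjmx M A) = anticonjmx M (trmx_wrt B A).
Proof.
move=> Bu Mu MBM; rewrite /trmx_wrt /anticonjmx.
have iBu : invmx B \in unitmx by rewrite unitmx_inv.
have tMu : M^T \in unitmx by rewrite unitmx_tr.
have itMu : invmx M^T \in unitmx by rewrite unitmx_inv.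
have icBu : invmx (conjm B) \in unitmx by rewrite unitmx_inv map_unitmx.
rewrite (trmx_conjmx _ Mu) (conjm_conjmx _ iBu) map_invmx -map_trmx.
rewrite -(conjuMumx _ iBu itMu) -(conjuMumx _ Mu icBu).
have tMBu : M^T *m B \in unitmx by rewrite unitmx_mul tMu.
rewrite -MBM (invmxM tMBu Mu) (invmxM tMu Bu).
by rewrite !mulmxA (mulmxV Mu) mul1mx.
Qed.

End FormAdjoints.

Section Coordinates.
Variables (R : rcfType) (n : nat) (G : 'M[R[i]]_n).
Local Notation K := R[i].
Local Notation conjm := (map_mx Num.conj).

Lemma ipV_pos_unitmx : (forall v, v != 0 -> 0 < ipV G v v) -> G \in unitmx.
Proof.
move=> Gpos; rewrite unitmxE unitfE; apply/det0P => -[v v0 vG].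
have v'0 : adjmx v != 0.
  by apply: contra v0 => /eqP v'0; rewrite -[v]adjmxK v'0 /adjmx map_mx0 trmx0.
by have := Gpos _ v'0; rewrite /ipV adjmxK vG mul0mx mxE ltxx.
Qed.

Lemma sgnb_conj s : (sgnb R s)^* = sgnb R s.
Proof. by case: s; rewrite /= ?rmorphN rmorph1. Qed.

Lemma sgnb_sqr s : sgnb R s * sgnb R s = 1.
Proof. by case: s; rewrite /= ?mulrNN mulr1. Qed.

Definition ipW_mx : 'M[K]_(n + n) := block_mx G 0 0 (conjm (invmx G)).
Definition bW_mx s : 'M[K]_(n + n) := block_mx 0 (sgnb R s)%:M 1%:M 0.

Lemma bW_mxE s w1 w2 : bW s w1 w2 = (w1^T *m bW_mx s *m w2) 0 0.
Proof.
rewrite -[w1]vsubmxK -[w2]vsubmxK /bW /Wpart /Dpart !col_mxKu !col_mxKd.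
rewrite tr_col_mx /bW_mx mul_row_block mul_row_col !mulmx0 !mulmx1 add0r addr0.
rewrite mul_mx_scalar -scalemxAl [RHS]mxE [X in _ = _ + X]mxE.
by rewrite -[X in _ = _ + _ * X]trmx11 trmx_mul trmxK.
Qed.

Lemma bW_mxV s : bW_mx s *m block_mx 0 1%:M (sgnb R s)%:M 0 = 1%:M.
Proof.
rewrite /bW_mx mulmx_block !mulmx0 !mul0mx !addr0 !add0r mul1mx.
by rewrite -scalar_mxM sgnb_sqr -scalar_mx_block.
Qed.

Lemma bW_mx_unit s : bW_mx s \in unitmx.
Proof. by case: (mulmx1_unit (bW_mxV s)). Qed.

Hypothesis Gu : G \in unitmx.

Lemma ipW_mxE w1 w2 : ipW G w1 w2 = (adjmx w1 *m ipW_mx *m w2) 0 0.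
Proof.
rewrite -[w1]vsubmxK -[w2]vsubmxK /ipW /Wpart /Dpart !col_mxKu !col_mxKd.
rewrite /adjmx map_col_mx tr_col_mx -!/(adjmx _) /ipW_mx mul_row_block mul_row_col.
rewrite !mulmx0 !addr0 add0r mxE; congr (_ + _).
rewrite /ipV /C0inv adjmxK -!mulmxA (mulmxA (invmx G)) (mulVmx Gu) mul1mx.
by rewrite -trmx11 trmx_mul !trmxK map_mxM -map_trmx mulmxA.
Qed.

Lemma ipW_mx_unit : ipW_mx \in unitmx.
Proof. by rewrite unitmxE det_ublock unitrM -!unitmxE map_unitmx unitmx_inv Gu. Qed.

Lemma adjmx_bW_mx s : adjmx G = G ->
  adjmx (bW_mx s) = ipW_mx *m invmx (bW_mx s) *m ipW_mx^T.
Proof.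
move=> Gh; rewrite (mulmx1_invmx (bW_mxV s)) /ipW_mx /bW_mx /adjmx.
rewrite map_block_mx !map_mx0 !map_scalar_mx /= sgnb_conj rmorph1 !tr_block_mx !trmx0.
rewrite !tr_scalar_mx mulmx_block !mulmx0 !mul0mx !addr0 !add0r mulmx1.
rewrite mulmx_block !mulmx0 !mul0mx !addr0 !add0r.
have adjGV : (conjm (invmx G))^T = invmx G by rewrite -/(adjmx _) adjmx_inv Gh.
rewrite adjGV (mulmxV Gu) -[conjm (invmx G)]trmxK adjGV mul_mx_scalar -scalemxAl.
by rewrite -trmx_mul (mulmxV Gu) trmx1 scalemx1.
Qed.

Lemma Cmap_col s u d : Cmap G s (col_mx u d) =
  col_mx (sgnb R s *: adjmx (d^T *m invmx G)) (adjmx u *m G)^T.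
Proof. by rewrite /Cmap /mkW /Wpart /Dpart col_mxKu col_mxKd. Qed.

Lemma bW_Cmap s w1 w2 : bW s (Cmap G s w1) w2 = ipW G w1 w2.
Proof.
rewrite -[w1]vsubmxK -[w2]vsubmxK Cmap_col /bW /ipW /Wpart /Dpart.
rewrite !col_mxKu !col_mxKd !trmxK /ipV /C0inv adjmxK -!mulmxA.
rewrite (mulmxA (invmx G)) (mulVmx Gu) mul1mx -scalemxAr [X in _ * X]mxE.
by rewrite mulrA sgnb_sqr mul1r.
Qed.

Lemma CmapK s w : Cmap G s (Cmap G s w) = sgnb R s *: w.
Proof.
rewrite -[w]vsubmxK !Cmap_col trmxK scale_col_mx; congr col_mx.
  by rewrite (mulmxK Gu) adjmxK.
by rewrite adjmxZ sgnb_conj adjmxK -scalemxAl (mulmxKV Gu) linearZ /= trmxK.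
Qed.

Lemma CmapZ s a w : Cmap G s (a *: w) = a^* *: Cmap G s w.
Proof.
rewrite -[w]vsubmxK scale_col_mx !Cmap_col scale_col_mx; congr col_mx.
  by rewrite linearZ /= -scalemxAl adjmxZ !scalerA mulrC.
by rewrite adjmxZ -scalemxAl linearZ.
Qed.

End Coordinates.

Lemma delta_mulmx_delta (F : nzRingType) k (M : 'M[F]_k) i j :
  (delta_mx (0 : 'I_1) i *m M *m delta_mx j (0 : 'I_1)) 0 0 = M i j.
Proof. by rewrite -rowE -colE !mxE. Qed.

Section Antilinear.
Variables (R : rcfType) (n : nat).
Local Notation K := R[i].
Local Notation conjm := (map_mx Num.conj).
Local Notation cV := 'cV[K]_(n + n).

Lemma fun_mx_delta (f : cV -> cV) j : fun_mx f *m delta_mx j 0 = f (delta_mx j 0).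
Proof. by rewrite -colE; apply/matrixP => a b; rewrite !mxE (ord1 b). Qed.

Lemma antilinear_fun_mx (f : cV -> cV) :
  (forall a w1 w2, f (a *: w1 + w2) = a^* *: f w1 + f w2) ->
  forall w, f w = fun_mx f *m conjm w.
Proof.
move=> f_antilin.
have f0 : f 0 = 0.
  have := f_antilin 1 0 0; rewrite scale1r addr0 rmorph1 scale1r => f00.
  by apply/(addrI (f 0)); rewrite addr0 -f00.
have fD w1 w2 : f (w1 + w2) = f w1 + f w2.
  by rewrite -[w1]scale1r f_antilin rmorph1 !scale1r.
have fZ a w : f (a *: w) = a^* *: f w by rewrite -[a *: w]addr0 f_antilin f0 addr0.
move=> w; rewrite [w]matrix_sum_delta.
rewrite (big_morph f fD f0) raddf_sum mulmx_sumr; apply: eq_bigr => i _.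
rewrite (big_morph f fD f0) raddf_sum mulmx_sumr; apply: eq_bigr => j _.
by rewrite fZ /= map_mxZ conjm_delta -scalemxAr (ord1 j) fun_mx_delta.
Qed.

End Antilinear.

Section Antiunitary.
Variables (R : rcfType) (n : nat) (G : 'M[R[i]]_n).
Local Notation K := R[i].
Local Notation conjm := (map_mx Num.conj).
Local Notation cV := 'cV[K]_(n + n).
Hypothesis Gu : G \in unitmx.

Lemma gramW_ipW : gramW (ipW G) = ipW_mx G.
Proof.
by apply/matrixP => i j; rewrite mxE (ipW_mxE Gu) adjmx_delta delta_mulmx_delta.
Qed.

Lemma gramW_bW s : gramW (bW s) = bW_mx R n s.
Proof. by apply/matrixP => i j; rewrite mxE bW_mxE trmx_delta delta_mulmx_delta. Qed.

Variables (s : bool) (T Tinv : cV -> cV).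
Hypothesis T_antilin : forall a w1 w2, T (a *: w1 + w2) = a^* *: T w1 + T w2.
Hypothesis T_antiunit : forall w1 w2, ipW G (T w1) (T w2) = (ipW G w1 w2)^*.
Hypothesis TC : forall w, T (Cmap G s w) = Cmap G s (T w).
Hypothesis TinvK : cancel Tinv T.

Local Notation Tm := (fun_mx T).

Lemma bW_antiunit w1 w2 : bW s (T w1) (T w2) = (bW s w1 w2)^*.
Proof.
have CK : Cmap G s (sgnb R s *: Cmap G s w1) = w1.
  by rewrite CmapZ sgnb_conj (CmapK Gu) scalerA sgnb_sqr scale1r.
by rewrite -CK TC !(bW_Cmap Gu) T_antiunit.
Qed.

Lemma antiunitary_ipW_mx : adjmx Tm *m ipW_mx G *m Tm = conjm (ipW_mx G).
Proof.
apply/matrixP => i j; rewrite -delta_mulmx_delta -adjmx_delta !mulmxA -adjmxM.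
rewrite -mulmxA !fun_mx_delta -(ipW_mxE Gu) T_antiunit (ipW_mxE Gu).
by rewrite adjmx_delta delta_mulmx_delta [RHS]mxE.
Qed.

Lemma antiunitary_bW_mx : Tm^T *m bW_mx R n s *m Tm = conjm (bW_mx R n s).
Proof.
apply/matrixP => i j; rewrite -delta_mulmx_delta -trmx_delta !mulmxA -trmx_mul.
rewrite -mulmxA !fun_mx_delta -bW_mxE bW_antiunit bW_mxE.
by rewrite trmx_delta delta_mulmx_delta [RHS]mxE.
Qed.

Lemma fun_mx_unit : Tm \in unitmx.
Proof.
have : conjm (ipW_mx G) \in unitmx by rewrite map_unitmx ipW_mx_unit.
by rewrite -antiunitary_ipW_mx unitmx_mul => /andP[].
Qed.

Lemma thetaW_anticonjmx A : thetaW T Tinv A = anticonjmx Tm A.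
Proof.
have TmE := antilinear_fun_mx T_antilin.
apply/matrixP => i j; rewrite /anticonjmx (conjumx _ fun_mx_unit) mxE TmE map_mxM.
have -> : conjm (Tinv (delta_mx j 0)) = invmx Tm *m delta_mx j 0.
  by rewrite -[X in invmx Tm *m X]TinvK TmE (mulKmx fun_mx_unit).
by rewrite !mulmxA -colE mxE.
Qed.

End Antiunitary.

Lemma sigmaW_adjmx_wrt (R : rcfType) n (G : 'M[R[i]]_n) A :
  G \in unitmx -> sigmaW G A = - adjmx_wrt (ipW_mx G) A.
Proof.
move=> Gu; rewrite /sigmaW /adjW (gramW_ipW Gu) /adjmx_wrt.
by rewrite (conjVmx _ (ipW_mx_unit Gu)).
Qed.

Lemma tauW_trmx_wrt (R : rcfType) n s (A : 'M[R[i]]_(n + n)) :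
  tauW s A = - trmx_wrt (bW_mx R n s) A.
Proof. by rewrite /tauW /transW gramW_bW /trmx_wrt (conjVmx _ (bW_mx_unit R n s)). Qed.

Theorem proposition4p3 (R : rcfType) (n : nat) (G : 'M[R[i]]_n)
  (G_herm : adjmx G = G)
  (G_pos : forall v : 'cV[R[i]]_n, v != 0 -> 0 < ipV G v v)
  (sym Eall : bool)
  (T Tinv : 'cV[R[i]]_(n + n) -> 'cV[R[i]]_(n + n))
  (T_antilin : forall (a : R[i]) (w1 w2 : 'cV[R[i]]_(n + n)),
      T (a *: w1 + w2) = a^* *: T w1 + T w2)
  (T_antiunit : forall w1 w2, ipW G (T w1) (T w2) = (ipW G w1 w2)^*)
  (TK : cancel T Tinv) (TinvK : cancel Tinv T)
  (TC : forall w, T (Cmap G sym w) = Cmap G sym (T w))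
  (T2 : (forall w, T (T w) = w) \/ (forall w, T (T w) = - w))
  (Tmix : (maps_onto T (@inV R n) (@inV R n) /\ maps_onto T (@inVd R n) (@inVd R n))
       \/ (maps_onto T (@inV R n) (@inVd R n) /\ maps_onto T (@inVd R n) (@inV R n)))
  (A : 'M[R[i]]_(n + n)) (HA : inEsp Eall A) :
  sigmaW G (tauW sym A) = tauW sym (sigmaW G A) /\
  sigmaW G (thetaW T Tinv A) = thetaW T Tinv (sigmaW G A) /\
  tauW sym (thetaW T Tinv A) = thetaW T Tinv (tauW sym A).
Proof.
have Gu := ipV_pos_unitmx G_pos.
have Hu := ipW_mx_unit Gu; have Bu := bW_mx_unit R n sym.
have thetaE := thetaW_anticonjmx Gu T_antilin T_antiunit TinvK.
have MHM := antiunitary_ipW_mx Gu T_antiunit.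
have MBM := antiunitary_bW_mx Gu T_antiunit TC.
have Mu := fun_mx_unit Gu T_antiunit.
(* Abstracting [fun_mx T] and [thetaW T Tinv] keeps the rewrites below from
   trying, very slowly, to unify [thetaW T Tinv _] with other matrix terms. *)
move: (fun_mx T) (thetaW T Tinv) Mu MHM MBM thetaE => M theta Mu MHM MBM thetaE.
rewrite !thetaE !(sigmaW_adjmx_wrt _ Gu) !tauW_trmx_wrt.
split; [|split].
- rewrite [in LHS]adjmx_wrtN opprK [in RHS]trmx_wrtN opprK.
  exact: adjmx_wrt_trmx_wrtC Hu Bu (adjmx_bW_mx Gu sym G_herm).
- by rewrite [in RHS]anticonjmxN (adjmx_wrt_anticonjmxC _ Hu Mu MHM).
- by rewrite [in RHS]anticonjmxN (trmx_wrt_anticonjmxC _ Bu Mu MBM).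
Qed.
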